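(* Let $\mathcal A=\mathcal A(\Sigma)$ be a cluster algebra, $H\le\mathrm{Aut}\,\mathcal A$, and let $\mathcal A(\Sigma_1)$ be maximal (under inclusion) among cluster subalgebras of $\mathcal A$ contained in $\mathcal A^H$. Put $H'=\mathrm{Gal}_{\Sigma_1}\mathcal A$. Then $\mathcal A(\Sigma_1)\in\mathcal M^{H'}_{sub}$; i.e. $\mathcal A(\Sigma_1)\subseteq\mathcal A^{H'}\subseteq\mathcal A$ is a Galois-like extension.
   Context: $\mathrm{Aut}\,\mathcal A$: group of cluster automorphisms. Cluster subalgebras $\mathcal A(\Sigma')$ arise from mixing-type sub-seeds of seeds of $\mathcal A$. $\mathrm{Gal}_{\Sigma'}\mathcal A=\{f\in\mathrm{Aut}\,\mathcal A: f|_{\mathcal A(\Sigma')}=\mathrm{id}\}$; $\mathcal A^H=\{z\in\mathcal A: f(z)=z\ \forall f\in H\}$; $\mathcal M^H_{sub}$ is the set of cluster subalgebras $\mathcal A(\Sigma')$ maximal (under inclusion) among cluster subalgebras contained in $\mathcal A^H$ and satisfying $\mathrm{Gal}_{\Sigma'}\mathcal A=H$. *)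

From HB Require Import structures.
From mathcomp Require Import all_boot all_order all_algebra.
From mathcomp Require Import all_fingroup.
From mathcomp Require Import mpoly.
Set Implicit Arguments. Unset Strict Implicit. Unset Printing Implicit Defensive.
Import Order.TTheory GRing.Theory Num.Theory.
Local Open Scope ring_scope.

Section Cluster.
Variables (F : fieldType) (N : nat).

(* A seed whose (extended) cluster variables are indexed by a subset of 'I_N:
   [ex] = exchangeable indices, [fr] = frozen indices, [xv i] = variable at i,
   [B i j] = exchange matrix entry (only i \in ex :|: fr, j \in ex matter;
   the other rows/columns are regarded as deleted). *)
Record seed := Seed {
  ex : {set 'I_N};
  fr : {set 'I_N};
  xv : 'I_N -> F;
  Bm : 'I_N -> 'I_N -> int }.

Definition valid_seed (s : seed) : Prop :=
  [/\ [disjoint ex s & fr s], ex s :|: fr s = setT,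
      (forall p : {mpoly int[N]}, (map_mpoly intr p).@[xv s] = 0 -> p = 0)
    & exists d : 'I_N -> int,
        (forall i, i \in ex s -> 0 < d i) /\
        (forall i j, i \in ex s -> j \in ex s ->
           d i * Bm s i j = - (d j * Bm s j i))].

Definition mutate (s : seed) (k : 'I_N) : seed :=
  Seed (ex s) (fr s)
    (fun j => if j == k then
       ((\prod_(i in ex s :|: fr s | 0 < Bm s i k) xv s i ^+ absz (Bm s i k)
        + \prod_(i in ex s :|: fr s | Bm s i k < 0) xv s i ^+ absz (Bm s i k))
        / xv s k)
     else xv s j)
    (fun i j => if (i == k) || (j == k) then - Bm s i j
      else Bm s i j +
        ((`|Bm s i k| * Bm s k j + Bm s i k * `|Bm s k j|) %/ 2)%Z).

Inductive mut_equiv (s : seed) : seed -> Prop :=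
  | me_refl : mut_equiv s s
  | me_step t k : mut_equiv s t -> k \in ex t -> mut_equiv s (mutate t k).

Inductive gen_ring (S : F -> Prop) : F -> Prop :=
  | gr_base z : S z -> gen_ring S z
  | gr_one : gen_ring S 1
  | gr_opp z : gen_ring S z -> gen_ring S (- z)
  | gr_add z w : gen_ring S z -> gen_ring S w -> gen_ring S (z + w)
  | gr_mul z w : gen_ring S z -> gen_ring S w -> gen_ring S (z * w).

Definition clusterAlg (s : seed) : F -> Prop :=
  gen_ring (fun z => exists t i, mut_equiv s t /\ i \in ex t :|: fr t /\ z = xv t i).

(* Cluster automorphisms of A(s) (Assem--Schiffler--Shramchenko), with
   frozen variables sent to frozen variables. Maps are F -> F; only their
   restriction to A(s) matters. *)
Definition clusterAut (s : seed) (f : F -> F) : Prop :=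
  let A := clusterAlg s in
      [/\ (forall z, A z -> A (f z)),
        (forall w, A w -> exists z, A z /\ f z = w),
        (forall z w, A z -> A w -> f z = f w -> z = w)
      & [/\ f 1 = 1,
        (forall z w, A z -> A w -> f (z + w) = f z + f w)
      & (forall z w, A z -> A w -> f (z * w) = f z * f w)]]
    /\
      exists t1 t2 (sg : {perm 'I_N}),
      [/\ mut_equiv s t1, mut_equiv s t2,
          (forall i, i \in ex t1 -> sg i \in ex t2) /\
          (forall i, i \in fr t1 -> sg i \in fr t2),
          (forall i, i \in ex t1 :|: fr t1 -> f (xv t1 i) = xv t2 (sg i))
        & (forall k, k \in ex t1 ->
             f (xv (mutate t1 k) k) = xv (mutate t2 (sg k)) (sg k))].

Definition autSubgroup (s : seed) (H : (F -> F) -> Prop) : Prop :=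
  [/\ (forall f, H f -> clusterAut s f),
      (exists f, H f),
      (forall f g, H f -> H g -> H (f \o g))
    & (forall f, H f -> exists g, H g /\
         forall z, clusterAlg s z -> g (f z) = z /\ f (g z) = z)].

Definition mixSubseed (t : seed) (I0 I1 : {set 'I_N}) : seed :=
  Seed (ex t :\: (I0 :|: I1)) ((fr t :|: I1) :\: I0) (xv t) (Bm t).

Definition subsetF (C D : F -> Prop) : Prop := forall z, C z -> D z.

Definition clusterSubalg (s : seed) (C : F -> Prop) : Prop :=
  exists t (I0 I1 : {set 'I_N}),
    [/\ mut_equiv s t, I0 \subset ex t :|: fr t, I1 \subset ex t /\
        [disjoint I0 & I1],
        (forall z, C z <-> clusterAlg (mixSubseed t I0 I1) z)
      & subsetF C (clusterAlg s)].

Definition galSub (s : seed) (C : F -> Prop) : (F -> F) -> Prop :=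
  fun f => clusterAut s f /\ forall z, C z -> f z = z.

Definition fixedAlg (s : seed) (H : (F -> F) -> Prop) : F -> Prop :=
  fun z => clusterAlg s z /\ forall f, H f -> f z = z.

Definition Msub (s : seed) (H : (F -> F) -> Prop) (C : F -> Prop) : Prop :=
  [/\ clusterSubalg s C, subsetF C (fixedAlg s H),
      (forall f, galSub s C f <-> H f)
    & forall C', clusterSubalg s C' -> subsetF C C' ->
        subsetF C' (fixedAlg s H) -> (forall f, galSub s C' f <-> H f) ->
        subsetF C' C].

End Cluster.

(* Since H fixes A(Sigma_1) pointwise, H <= H' = Gal_{Sigma_1} A, hence
   A^{H'} <= A^H.  So any cluster subalgebra between A(Sigma_1) and A^{H'}
   also lies in A^H, and maximality for H gives maximality for H'. *)
From HB Require Import structures.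
From mathcomp Require Import all_boot all_order all_algebra.

Set Implicit Arguments.
Unset Strict Implicit.
Unset Printing Implicit Defensive.

Section GaloisCorrespondence.
Variables (F : fieldType) (N : nat) (S : seed F N).

Lemma subsetF_trans (C D E : F -> Prop) :
  subsetF C D -> subsetF D E -> subsetF C E.
Proof. by move=> CD DE z /CD /DE. Qed.

Lemma fixedAlgS (H H' : (F -> F) -> Prop) :
  (forall f, H f -> H' f) -> subsetF (fixedAlg S H') (fixedAlg S H).
Proof. by move=> HH' z [Az fixz]; split=> // f /HH'; apply: fixz. Qed.

Lemma sub_fixedAlg_galSub (C : F -> Prop) :
  subsetF C (clusterAlg S) -> subsetF C (fixedAlg S (galSub S C)).
Proof. by move=> CA z Cz; split; [exact: CA | move=> f [_ ->]]. Qed.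

Lemma autSubgroup_sub_galSub (H : (F -> F) -> Prop) (C : F -> Prop) :
  autSubgroup S H -> subsetF C (fixedAlg S H) -> forall f, H f -> galSub S C f.
Proof.
case=> HAut _ _ _ CH f Hf; split; first exact: HAut.
by move=> z /CH [_ ->].
Qed.

End GaloisCorrespondence.

Theorem mainTheorem13 (F : fieldType) (N : nat) (S : seed F N)
  (H : (F -> F) -> Prop) (C1 : F -> Prop) :
  valid_seed S ->
  autSubgroup S H ->
  clusterSubalg S C1 ->
  subsetF C1 (fixedAlg S H) ->
  (forall C, clusterSubalg S C -> subsetF C1 C -> subsetF C (fixedAlg S H) ->
     subsetF C C1) ->
  Msub S (galSub S C1) C1.
Proof.
move=> _ subH subC1 C1H maxC1.
have fixGal_fixH : subsetF (fixedAlg S (galSub S C1)) (fixedAlg S H).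
  exact/fixedAlgS/autSubgroup_sub_galSub.
split.
- exact: subC1.
- by apply: sub_fixedAlg_galSub => z /C1H [].
- by [].
move=> C subC C1C CGal _.
by apply: maxC1 => //; apply: subsetF_trans CGal fixGal_fixH.
Qed.
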